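(* Let $K$ be a field, $c\in K\setminus\{0\}$, $n\ge 1$, and let $f$ be a $c$-frieze of order $n$ over $K$. Put $s=f(0,n)$ and $t=f(1,n+1)$. Let $k$ be an integer with $-1\le k\le n+2$. (a) If $k$ is even, then for all $i\in\mathbb{Z}$: $f(2i,2i+k-1)=f(2i+n+3,2i+k+n+2)$ and $f(2i+1,2i+k)=f(2i+n+4,2i+k+n+3)$. (b) If $k$ is odd, then for all $i\in\mathbb{Z}$: $f(2i,2i+k-1)=\frac{(-c)^{n+1}}{t^2}f(2i+n+3,2i+k+n+2)$ and $f(2i+1,2i+k)=\frac{(-c)^{n+1}}{s^2}f(2i+n+4,2i+k+n+3)$. Furthermore, if $k$ is odd and $n$ is even, then $f(i,i+k-1)=f(i+2n+6,i+k+2n+5)$ for all $i\in\mathbb{Z}$.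
   Context: For a nonzero $c\in K$, the $c$-continuant polynomials $P_k=P_k^c$ ($k\ge -1$) are defined by $P_{-1}=0$, $P_0=1$ and, for $k\ge1$, $P_k(x_1,\dots,x_k)=x_kP_{k-1}(x_1,\dots,x_{k-1})+cP_{k-2}(x_1,\dots,x_{k-2})$. A family $(x_i)_{i\in\mathbb{Z}}$ of elements of $K$ is $n$-admissible if $P_{n+2}(x_i,\dots,x_{i+n+1})=0$ for all $i\in\mathbb{Z}$. Let $\mathbb{B}_n=\{(i,j)\in\mathbb{Z}^2:-2\le j-i\le n+1\}$. A $c$-frieze of order $n$ is a function $f:\mathbb{B}_n\to K$ for which there is an $n$-admissible family $(x_i)$ with $f(i,j)=P_{j-i+1}(x_i,\dots,x_j)$ for all $(i,j)\in\mathbb{B}_n$ (so $f(i,i-2)=0$, $f(i,i-1)=1$, $f(i,i)=x_i$). For $-1\le k\le n+2$, row $k$ of $f$ consists of the values $f(i,i+k-1)$, $i\in\mathbb{Z}$. It is known that $st=(-c)^{n+1}$, so $s,t\neq0$. *)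

From mathcomp Require Import all_boot all_order all_algebra.
Set Implicit Arguments. Unset Strict Implicit. Unset Printing Implicit Defensive.
Import Order.TTheory GRing.Theory Num.Theory.
Local Open Scope ring_scope.

(* Continuants on the reversed list: contQ c [:: x_k; ...; x_1] = P_k(x_1,...,x_k). *)
Fixpoint contQ (K : fieldType) (c : K) (s : seq K) : K :=
  match s with
  | [::] => 1
  | x :: r =>
    match r with
    | [::] => x
    | _ :: r' => x * contQ c r + c * contQ c r'
    end
  end.

Definition contP (K : fieldType) (c : K) (s : seq K) : K := contQ c (rev s).

Definition window (K : fieldType) (x : int -> K) (i : int) (m : nat) : seq K :=
  mkseq (fun k => x (i + k%:Z)) m.

Definition admissible (K : fieldType) (c : K) (n : nat) (x : int -> K) : Prop :=
  forall i : int, contP c (window x i n.+2) = 0.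

Definition frieze_val (K : fieldType) (c : K) (x : int -> K) (i j : int) : K :=
  if (j - i + 1 < 0) then 0 else contP c (window x i (absz (j - i + 1))).

(* f : Z x Z -> K is a c-frieze of order n (only its values on B_n matter). *)
Definition is_frieze (K : fieldType) (c : K) (n : nat) (f : int -> int -> K) : Prop :=
  exists x : int -> K, admissible c n x /\
    forall i j : int, -2 <= j - i <= n%:Z + 1 -> f i j = frieze_val c x i j.

From mathcomp Require Import all_boot all_order all_algebra.
From mathcomp Require Import zify ring.
Set Implicit Arguments. Unset Strict Implicit. Unset Printing Implicit Defensive.
Import Order.TTheory GRing.Theory Num.Theory.
Local Open Scope ring_scope.

(* Writing a_i for the entry P_{n+1}(x_i,...,x_{i+n}) of row n+1, the
   determinant identity P_{l+2}(x_i..) P_l(x_{i+1}..) - P_{l+1}(x_{i+1}..) P_{l+1}(x_i..)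
   = -(-c)^{l+1} at l = n, together with admissibility, gives
   a_i a_{i+1} = (-c)^{n+1}; so a is nonzero and 2-periodic.  Comparing the two
   recurrences for the vanishing row n+2 yields x_{i+n+3} = (a_{i+1}/a_i) x_i, and
   the ratios a_{i+1}/a_i alternate between r and r^-1.  Such an alternating
   rescaling multiplies continuants of odd length by r and fixes those of even
   length, which is the glide symmetry; for n even two glides compose to the
   identity. *)

Section Continuant.
Variables (K : fieldType) (c : K) (x : int -> K).

Definition cont (i : int) (l : nat) : K := contP c (window x i l).

Lemma cont0 i : cont i 0 = 1. Proof. by []. Qed.

Lemma cont1 i : cont i 1 = x i. Proof. by rewrite /cont /contP /window /= addr0. Qed.

Lemma contSr i l : cont i l.+2 = x (i + l.+1%:Z) * cont i l.+1 + c * cont i l.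
Proof. by rewrite /cont /contP /window mkseqS rev_rcons [mkseq _ l.+1]mkseqS rev_rcons. Qed.

Lemma contSl l i : cont i l.+2 = x i * cont (i + 1) l.+1 + c * cont (i + 2) l.
Proof.
elim/ltn_ind: l i => -[|[|l]] IH i.
- rewrite contSr !cont1 !cont0.
  have -> : i + 1%N%:Z = i + 1 by lia.
  by rewrite mulrC.
- rewrite !contSr !cont1 !cont0.
  have -> : i + 1 + 1%N%:Z = i + 2%N%:Z by lia.
  have -> : i + 1%N%:Z = i + 1 by lia.
  have -> : i + 2 = i + 2%N%:Z by lia.
  ring.
- rewrite contSr (IH l.+1 _ i) // (IH l _ i) // (contSr (i + 1) l.+1) (contSr (i + 2) l).
  have -> : i + 1 + l.+2%:Z = i + l.+3%:Z by lia.
  have -> : i + 2 + l.+1%:Z = i + l.+3%:Z by lia.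
  ring.
Qed.

Lemma cont_det l i :
  cont i l.+2 * cont (i + 1) l - cont (i + 1) l.+1 * cont i l.+1 = - (- c) ^+ l.+1.
Proof.
elim: l i => [|l IH] i.
  rewrite contSr !cont1 !cont0.
  have -> : i + 1%N%:Z = i + 1 by lia.
  by rewrite expr1; ring.
rewrite contSr (contSr (i + 1) l).
have -> : i + 1 + l.+1%:Z = i + l.+2%:Z by lia.
rewrite exprS -[in X in _ = X]mulrN -(IH i); ring.
Qed.

End Continuant.

Lemma cont_gauge (K : fieldType) (c : K) (x y : int -> K) (i j : int) (r : K) :
  r != 0 -> (forall m : nat, y (i + m%:Z) = (if odd m then r^-1 else r) * x (j + m%:Z)) ->
  forall l, cont c y i l = (if odd l then r else 1) * cont c x j l.
Proof.
move=> r0 yE.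
suff H l : cont c y i l = (if odd l then r else 1) * cont c x j l /\
           cont c y i l.+1 = (if odd l.+1 then r else 1) * cont c x j l.+1.
  by move=> l; case: (H l).
elim: l => [|l [IH1 IH2]].
  by rewrite !cont0 !cont1 mul1r; split=> //; have := yE 0%N; rewrite !addr0.
split=> //; rewrite !contSr IH1 IH2 yE /=.
by case: (odd l) => /=; rewrite mul1r; [ring | field].
Qed.

Section Frieze.
Variables (K : fieldType) (c : K) (n : nat) (x : int -> K).
Hypotheses (c0 : c != 0) (adm : admissible c n x).

Let a i := cont c x i n.+1.

Lemma boundary_mul i : a i * a (i + 1) = (- c) ^+ n.+1.
Proof.
have := cont_det c x n i.
by rewrite (adm i : cont c x i n.+2 = 0) mul0r sub0r mulrC => /oppr_inj.
Qed.

Lemma boundary_neq0 i : a i != 0.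
Proof.
have : (- c) ^+ n.+1 != 0 by rewrite expf_eq0 oppr_eq0 (negPf c0) andbF.
by rewrite -(boundary_mul i) mulf_eq0 negb_or => /andP[].
Qed.

Lemma boundary_add2 i : a (i + 2) = a i.
Proof.
apply: (mulfI (boundary_neq0 (i + 1))).
have -> : i + 2 = i + 1 + 1 by lia.
by rewrite boundary_mul mulrC boundary_mul.
Qed.

Lemma boundary_periodic z i : a (i + 2 * z) = a i.
Proof.
elim/int_rect: z i => [|m IH|m IH] i.
- by rewrite mulr0 addr0.
- have -> : i + 2 * m.+1%:Z = i + 2 * m%:Z + 2 by lia.
  by rewrite boundary_add2 IH.
- by rewrite -(IH i) -boundary_add2; congr a; lia.
Qed.

Lemma boundary_ratio m i :
  a (i + m%:Z + 1) / a (i + m%:Z) = if odd m then (a (i + 1) / a i)^-1 else a (i + 1) / a i.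
Proof.
elim: m => [|m IH]; first by rewrite addr0.
have -> : i + m.+1%:Z = i + m%:Z + 1 by lia.
have -> : i + m%:Z + 1 + 1 = i + m%:Z + 2 by lia.
by rewrite boundary_add2 -invf_div IH /=; case: (odd m); rewrite ?invrK.
Qed.

Lemma shift_entry i : x (i + n%:Z + 3) = a (i + 1) / a i * x i.
Proof.
have right := contSr c x (i + 2) n; have left := contSl c x n i.
rewrite (adm (i + 2) : cont c x (i + 2) n.+2 = 0) in right.
rewrite (adm i : cont c x i n.+2 = 0) in left.
apply: (mulIf (boundary_neq0 i)); rewrite mulrAC divfK ?boundary_neq0 //.
rewrite -[a i]boundary_add2 /a.
have -> : i + n%:Z + 3 = i + 2 + n.+1%:Z by lia.
apply: (@addIr _ (c * cont c x (i + 2) n)).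
by rewrite -right mulrC -left.
Qed.

Lemma cont_shift l i :
  cont c x (i + n%:Z + 3) l = (if odd l then a (i + 1) / a i else 1) * cont c x i l.
Proof.
have r0 : a (i + 1) / a i != 0 by rewrite mulf_neq0 ?invr_eq0 ?boundary_neq0.
apply: (@cont_gauge K c x x (i + n%:Z + 3) i _ r0) => m.
have -> : i + n%:Z + 3 + m%:Z = i + m%:Z + n%:Z + 3 by lia.
by rewrite shift_entry boundary_ratio; case: (odd m); rewrite ?invrK.
Qed.

Lemma cont_shift_odd l i : odd l ->
  cont c x i l = (- c) ^+ n.+1 / a (i + 1) ^+ 2 * cont c x (i + n%:Z + 3) l.
Proof.
move=> odd_l; rewrite cont_shift odd_l -(boundary_mul i) mulrA -[LHS]mul1r.
by congr (_ * _); field; rewrite !boundary_neq0.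
Qed.

Lemma cont_periodic l i : ~~ odd n -> cont c x (i + 2 * n%:Z + 6) l = cont c x i l.
Proof.
move=> even_n; have -> : i + 2 * n%:Z + 6 = i + n%:Z + 3 + n%:Z + 3 by lia.
rewrite cont_shift cont_shift mulrA -[RHS]mul1r; congr (_ * _).
have -> : i + n%:Z + 3 = i + (n + 3)%N%:Z by lia.
rewrite boundary_ratio oddD (negPf even_n) /=.
by case: (odd l); rewrite ?mulr1 // mulVf // mulf_neq0 ?invr_eq0 ?boundary_neq0.
Qed.
End Frieze.

Lemma frieze_entry (K : fieldType) (c : K) (n : nat) (x : int -> K)
    (f : int -> int -> K) (k : int) :
  (forall i j, -2 <= j - i <= n%:Z + 1 -> f i j = frieze_val c x i j) ->
  -1 <= k <= n%:Z + 2 ->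
  forall i j, j = i + k - 1 -> f i j = if k < 0 then 0 else cont c x i `|k|.
Proof.
move=> fxE /andP[k_ge k_le] i j ->.
rewrite fxE; last by apply/andP; split; lia.
by rewrite /frieze_val (_ : i + k - 1 - i + 1 = k) //; lia.
Qed.

Theorem mainTheorem1 (K : fieldType) (c : K) (n : nat) (f : int -> int -> K)
  (k : int) :
  c != 0 -> (1 <= n)%N -> is_frieze c n f ->
  -1 <= k <= n%:Z + 2 ->
  let s := f 0 n%:Z in
  let t := f 1 (n%:Z + 1) in
  (~~ odd (absz k) ->
     forall i : int,
       f (2 * i) (2 * i + k - 1) = f (2 * i + n%:Z + 3) (2 * i + k + n%:Z + 2) /\
       f (2 * i + 1) (2 * i + k) = f (2 * i + n%:Z + 4) (2 * i + k + n%:Z + 3)) /\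
  (odd (absz k) ->
     forall i : int,
       f (2 * i) (2 * i + k - 1) =
         (- c) ^+ n.+1 / t ^+ 2 * f (2 * i + n%:Z + 3) (2 * i + k + n%:Z + 2) /\
       f (2 * i + 1) (2 * i + k) =
         (- c) ^+ n.+1 / s ^+ 2 * f (2 * i + n%:Z + 4) (2 * i + k + n%:Z + 3)) /\
  (odd (absz k) -> ~~ odd n ->
     forall i : int,
       f i (i + k - 1) = f (i + 2 * n%:Z + 6) (i + k + 2 * n%:Z + 5)).
Proof.
move=> c0 _ [x [adm fxE]] k_range s t.
have fE := frieze_entry fxE k_range.
have sE : s = cont c x 0 n.+1.
  by rewrite /s (frieze_entry fxE (k := n.+1%:Z)) //; lia.
have tE : t = cont c x 1 n.+1.
  by rewrite /t (frieze_entry fxE (k := n.+1%:Z)) //; lia.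
have even_sE i : cont c x (2 * i) n.+1 = s.
  by rewrite sE -(boundary_periodic c0 adm i 0) add0r.
have odd_tE i : cont c x (2 * i + 1) n.+1 = t.
  by rewrite tE -(boundary_periodic c0 adm i 1) addrC.
split; [|split] => [even_k i|odd_k i|odd_k even_n i]; rewrite !fE; try lia;
  case: ifP => // _; rewrite ?mulr0 //.
- have -> : 2 * i + n%:Z + 4 = 2 * i + 1 + n%:Z + 3 by lia.
  by rewrite !(cont_shift c0 adm) (negPf even_k) !mul1r.
- have -> : 2 * i + n%:Z + 4 = 2 * i + 1 + n%:Z + 3 by lia.
  split; rewrite (cont_shift_odd c0 adm _ odd_k); first by rewrite odd_tE.
  by rewrite (_ : 2 * i + 1 + 1 = 2 * (i + 1)) ?even_sE //; lia.
- by rewrite cont_periodic.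
Qed.
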